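(* Consider a tranca mínima (as defined in the context), and let $k\in\{1,2,3,4,5,6\}$. If neither of the two players of the losing team has, in their initial hand, any tile containing the number $0$ or the number $k$, then at least one of the two players of the losing team places at least one tile during the game.
   Context: Domino tiles: the set of tiles consists of the 28 unordered pairs $[a,b]=[b,a]$ with $a,b\in\{0,1,\dots,6\}$; the number of points (pips) of $[a,b]$ is $a+b$. Four players, numbered 1 to 4, play; players 1 and 3 form one team and players 2 and 4 the other. The 28 tiles are dealt, 7 to each player (the initial hands). Players take turns in cyclic order $1,2,3,4,1,\dots$. The starting player places any one of their tiles on the table, forming a line of tiles (the board) with two open ends. On each subsequent turn, the player whose turn it is must, if they hold a tile containing a number equal to the number shown at one of the two open ends, place such a tile at that end (with equal numbers adjacent), the other number of the tile becoming the new open end; if they hold no such tile, they pass. A game ends either when a player places their last tile, or in a tranca (blocked game): a position in which no player holds a tile that can be placed. In a game ending in a tranca, the team whose two players' remaining tiles have the smaller total number of pips wins, and the other team is the losing team. A tranca mínima is a game ending in a tranca in which the total number of pips on the tiles of the board at the end of the game is $42$. *)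

(* Dominoes: players 1..4 are represented by 'I_4 = {0,1,2,3}
   (player i+1 <-> index i); team of players 1,3 = even indices, team of 2,4 = odd. *)
From mathcomp Require Import all_boot.
Set Implicit Arguments. Unset Strict Implicit. Unset Printing Implicit Defensive.

(* A tile [a,b] = [b,a] is represented by its normal form (a,b) with a <= b. *)
Definition tile := {t : 'I_7 * 'I_7 | t.1 <= t.2}.

Definition pips (t : tile) : nat := (sval t).1 + (sval t).2.

Definition has_num (t : tile) (v : 'I_7) : bool := ((sval t).1 == v) || ((sval t).2 == v).

Definition other (t : tile) (v : 'I_7) : 'I_7 :=
  if (sval t).1 == v then (sval t).2 else (sval t).1.

Definition deal := tile -> 'I_4.
Definition valid_deal (d : deal) : Prop := forall p : 'I_4, #|[set t | d t == p]| = 7.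

(* open ends of the board: None before the first move *)
Definition ends := option ('I_7 * 'I_7).

Definition hand (d : deal) (played : seq tile) (p : 'I_4) : {set tile} :=
  [set t | (d t == p) && (t \notin played)].

Definition playable (e : ends) (t : tile) : bool :=
  match e with
  | None => true
  | Some (l, r) => has_num t l || has_num t r
  end.

Definition blocked (d : deal) (e : ends) (played : seq tile) : bool :=
  [forall p : 'I_4, [forall t in hand d played p, ~~ playable e t]].

Definition someone_out (d : deal) (played : seq tile) : bool :=
  [exists p : 'I_4, hand d played p == set0].

Definition terminal (d : deal) (e : ends) (played : seq tile) : bool :=
  someone_out d played || (isSome e && blocked d e played).

(* whose turn is the i-th move (0-based); the starting player is player 1 *)
Definition turn (i : nat) : 'I_4 := inord (i %% 4).

(* a move: pass, or place a tile at the left (true) / right (false) open end *)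
Inductive move := Pass | Play of tile & bool.

Fixpoint valid_from (d : deal) (e : ends) (played : seq tile) (i : nat)
    (ms : seq move) : Prop :=
  match ms with
  | [::] => terminal d e played
  | m :: ms' =>
      ~~ terminal d e played /\
      let h := hand d played (turn i) in
      match m with
      | Pass => [forall t in h, ~~ playable e t] /\ valid_from d e played i.+1 ms'
      | Play t lft =>
          t \in h /\
          match e with
          | None => valid_from d (Some ((sval t).1, (sval t).2)) (t :: played) i.+1 ms'
          | Some (l, r) =>
              if lft then
                has_num t l /\ valid_from d (Some (other t l, r)) (t :: played) i.+1 ms'
              else
                has_num t r /\ valid_from d (Some (l, other t r)) (t :: played) i.+1 ms'
          end
      end
  end.

Definition game (d : deal) (ms : seq move) : Prop := valid_from d None [::] 0 ms.

Definition placed_tiles (ms : seq move) : seq tile :=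
  flatten [seq (if m is Play t _ then [:: t] else [::]) | m <- ms].

Fixpoint final_ends (e : ends) (ms : seq move) : ends :=
  match ms with
  | [::] => e
  | Pass :: ms' => final_ends e ms'
  | Play t lft :: ms' =>
      match e with
      | None => final_ends (Some ((sval t).1, (sval t).2)) ms'
      | Some (l, r) =>
          final_ends (if lft then Some (other t l, r) else Some (l, other t r)) ms'
      end
  end.

Definition ends_in_tranca (d : deal) (ms : seq move) : Prop :=
  ~~ someone_out d (placed_tiles ms) /\
  isSome (final_ends None ms) /\ blocked d (final_ends None ms) (placed_tiles ms).

Definition board_pips (ms : seq move) : nat := \sum_(t <- placed_tiles ms) pips t.

Definition tranca_minima (d : deal) (ms : seq move) : Prop :=
  game d ms /\ ends_in_tranca d ms /\ board_pips ms = 42.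

(* team b: players with odd index == b  (b = false: players 1,3; b = true: players 2,4) *)
Definition in_team (b : bool) (p : 'I_4) : bool := odd p == b.

Definition remaining_pips (d : deal) (ms : seq move) (b : bool) : nat :=
  \sum_(t : tile | in_team b (d t) && (t \notin placed_tiles ms)) pips t.

Definition losing_team (d : deal) (ms : seq move) (b : bool) : Prop :=
  remaining_pips d ms (~~ b) < remaining_pips d ms b.

Definition is_play (m : move) : bool := if m is Play _ _ then true else false.

From mathcomp Require Import all_boot zify.
Set Implicit Arguments. Unset Strict Implicit. Unset Printing Implicit Defensive.

(* Suppose the team of [b] never plays, so the board consists of the other team's tiles only.
   Along the line of tiles equal numbers meet in pairs, hence every number occurs an even number
   of times on the board and the open ends together. At a tranca every tile carrying an open-end
   number v has been played, so v occurs 8 times; this forces both ends to show v and makes every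
   count even. Each other number x then occurs at least twice (the tile [v,x] is on the board), so
   the board carries at least 42 + 6v pips. For a tranca minima this gives v = 0, exactly two
   occurrences of every other number, and 10 tiles, of which at most 8 contain 0 or k. Hence at
   least 2 of the 15 tiles avoiding 0 and k lie on the board, which leaves 13 of them for the idle
   team although its 14 tiles all avoid 0 and k. *)

Definition occ (t : tile) (x : 'I_7) : nat := ((sval t).1 == x) + ((sval t).2 == x).

Lemma has_numE t x : has_num t x = (0 < occ t x).
Proof. by rewrite /has_num /occ; case: eqP; case: eqP. Qed.

Lemma occ_other t v x : has_num t v -> occ t x = (v == x) + (other t v == x).
Proof.
rewrite /has_num /occ /other.
by case: ((sval t).1 =P v) => [-> | _ /eqP ->] //; rewrite addnC.
Qed.

Lemma sum_eq_mul (I : finType) (a : I) (F : I -> nat) : \sum_i (a == i) * F i = F a.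
Proof.
rewrite (bigD1 a) //= eqxx mul1n big1 ?addn0 // => i.
by rewrite eq_sym => /negbTE ->.
Qed.

Lemma sum_occ_mul t (F : 'I_7 -> nat) :
  \sum_x occ t x * F x = F (sval t).1 + F (sval t).2.
Proof.
rewrite -(sum_eq_mul (sval t).1 F) -(sum_eq_mul (sval t).2 F) -big_split.
by apply: eq_bigr => x _; rewrite mulnDl.
Qed.

Lemma pips_occ t : pips t = \sum_x occ t x * x.
Proof. by rewrite sum_occ_mul. Qed.

Lemma sum_occ t : \sum_x occ t x = 2.
Proof. by rewrite -[RHS](sum_occ_mul t (fun=> 1)); apply: eq_bigr => x _; rewrite muln1. Qed.

Definition sort2 (a b : 'I_7) : 'I_7 * 'I_7 := if a <= b then (a, b) else (b, a).

Lemma sort2_sorted a b : (sort2 a b).1 <= (sort2 a b).2.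
Proof. by rewrite /sort2; case: (leqP a b) => [|/ltnW]. Qed.

Definition tile_of (a b : 'I_7) : tile := exist _ (sort2 a b) (sort2_sorted a b).

Lemma tile_ofK t : tile_of (sval t).1 (sval t).2 = t.
Proof. by case: t => [[a b] ab]; apply: val_inj; rewrite /= /sort2 ab. Qed.

Lemma has_num_tile_of a b : has_num (tile_of a b) a && has_num (tile_of a b) b.
Proof. by rewrite /has_num /= /sort2; case: ifP; rewrite !eqxx ?orbT. Qed.

(* [ord7] and [tile_of] avoid [insub], whose opaque proof blocks evaluation, so that
   [vm_compute] can run through the enumerations [nums] and [tiles]. *)
Definition ord7 (i : nat) : 'I_7 := Ordinal (ltn_pmod i (isT : 0 < 7)).
Definition nums : seq 'I_7 := [seq ord7 i | i <- iota 0 7].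
Definition tiles : seq tile := undup [seq tile_of a b | a <- nums, b <- nums].

Lemma mem_nums x : x \in nums.
Proof.
apply/mapP; exists (val x); first by rewrite mem_iota ltn_ord.
by apply: val_inj; rewrite /= modn_small.
Qed.

Lemma mem_tiles t : t \in tiles.
Proof. by rewrite mem_undup -[t]tile_ofK; apply: allpairs_f; apply: mem_nums. Qed.

Lemma forall_numP (P : pred 'I_7) : reflect (forall x, P x) (all P nums).
Proof.
by apply: (iffP allP) => [P_nums x | P_all x _]; [exact: P_nums (mem_nums x) | exact: P_all].
Qed.

Lemma sum_enum (T : finType) (s : seq T) (F : T -> nat) :
  uniq s -> (forall x, x \in s) -> \sum_x F x = \sum_(x <- s) F x.
Proof.
move=> s_uniq s_full; apply: perm_big; apply: uniq_perm => //.
  exact: index_enum_uniq.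
by move=> x; rewrite mem_index_enum s_full.
Qed.

Lemma sum_nums (F : 'I_7 -> nat) : \sum_x F x = \sum_(x <- nums) F x.
Proof. exact/sum_enum/mem_nums. Qed.

Lemma sum_tiles (F : tile -> nat) : \sum_(t : tile) F t = \sum_(t <- tiles) F t.
Proof. exact/sum_enum/mem_tiles/undup_uniq. Qed.

Lemma sum_tiles_occ x : \sum_(t : tile) occ t x = 8.
Proof. by rewrite sum_tiles; apply/eqP; move: x; apply/forall_numP; rewrite unlock; vm_compute. Qed.

Lemma sum_tiles_has0 : \sum_(t : tile) has_num t ord0 = 7.
Proof. by rewrite sum_tiles unlock; vm_compute. Qed.

Lemma sum_tiles_has0_occ k : k != ord0 -> \sum_(t : tile) has_num t ord0 * occ t k = 1.
Proof.
rewrite sum_tiles => k0; apply/eqP; move: k0; apply/implyP; move: k; apply/forall_numP.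
by rewrite unlock; vm_compute.
Qed.

Definition avoiding (k : 'I_7) : {set tile} := [set t | ~~ has_num t ord0 && ~~ has_num t k].

Lemma card_avoiding k : k != ord0 -> #|avoiding k| = 15.
Proof.
(* [inE] first: membership in a [{set _}] does not evaluate in the VM. *)
rewrite -sum1_card big_mkcond; under eq_bigr do rewrite inE.
rewrite sum_tiles => k0; apply/eqP; move: k0; apply/implyP.
by move: k; apply/forall_numP; rewrite unlock; vm_compute.
Qed.

Definition min_occs (v x : 'I_7) : nat := 2 + (v == x) * 6.

Lemma sum_min_occs v : \sum_x min_occs v x = 20.
Proof. by rewrite sum_nums; apply/eqP; move: v; apply/forall_numP; rewrite unlock; vm_compute. Qed.

Lemma sum_min_occs_weight v : \sum_x min_occs v x * x = 42 + 6 * v.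
Proof. by rewrite sum_nums; apply/eqP; move: v; apply/forall_numP; rewrite unlock; vm_compute. Qed.

Definition occs (B : {set tile}) (x : 'I_7) : nat := \sum_(t in B) occ t x.

Lemma occs_full (B : {set tile}) v : (forall t, has_num t v -> t \in B) -> occs B v = 8.
Proof.
move=> B_full; rewrite /occs big_rmcond ?sum_tiles_occ // => t tB.
by apply/eqP; rewrite -leqn0 leqNgt -has_numE; apply: contra tB; apply: B_full.
Qed.

Section MinimalBoard.

Variables (B : {set tile}) (v : 'I_7).
Hypotheses (B_full : forall t, has_num t v -> t \in B)
           (B_even : forall x, ~~ odd (occs B x))
           (B_pips : \sum_(t in B) pips t = 42).

Lemma min_occs_le x : min_occs v x <= occs B x.
Proof.
rewrite /min_occs; case: eqP => [<- | _]; first by rewrite occs_full.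
have /andP[t_v t_x] := has_num_tile_of v x.
have occs_gt0 : 0 < occs B x.
  by rewrite /occs (bigD1 _ (B_full t_v)) /= ltn_addr // -has_numE.
by have := B_even x; case: (occs B x) occs_gt0 => [|[|n]].
Qed.

Lemma sum_occs_weight : \sum_x occs B x * x = 42.
Proof.
rewrite -B_pips (eq_bigr _ (fun t _ => pips_occ t)) exchange_big /=.
by apply: eq_bigr => x _; rewrite /occs big_distrl.
Qed.

Lemma occs_eq_min : v = ord0 /\ forall x, occs B x = min_occs v x.
Proof.
have le_x x : min_occs v x * x <= occs B x * x ?= iff (min_occs v x * x == occs B x * x).
  exact/leqif_eq/leq_mul/leqnn/min_occs_le.
have [le42 tight] := leqif_sum (fun x (_ : true) => le_x x).
rewrite sum_min_occs_weight sum_occs_weight in le42 tight.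
have v0 : v = ord0 by apply: val_inj => /=; lia.
move: tight; rewrite {1}v0 => /esym/forall_inP eq_x.
split=> // x; have [x0 | x_gt0] := posnP x.
  have -> : x = v by rewrite v0; apply: val_inj.
  by rewrite occs_full // /min_occs eqxx.
by move: (eq_x x isT); rewrite eqn_pmul2r // => /eqP ->.
Qed.

Lemma board_center : v = ord0.
Proof. by case: occs_eq_min. Qed.

Lemma occs_board x : occs B x = min_occs ord0 x.
Proof. by case: occs_eq_min => <-. Qed.

Lemma card_board : #|B| = 10.
Proof.
have : #|B| * 2 = 20.
  rewrite -sum_nat_const -(sum_min_occs ord0).
  rewrite (eq_bigr _ (fun t _ => esym (sum_occ t))) exchange_big /=.
  by apply: eq_bigr => x _; apply: occs_board.
lia.
Qed.

Lemma avoiding_board k : k != ord0 -> 2 <= #|B :&: avoiding k|.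
Proof.
move=> k0; have v0 := board_center.
have full0 t : has_num t ord0 -> t \in B by rewrite -v0; apply: B_full.
have with0 : \sum_(t in B) has_num t ord0 * occ t k = 1.
  rewrite big_rmcond ?sum_tiles_has0_occ // => t tB.
  by case: (boolP (has_num t ord0)) => // /full0; rewrite (negbTE tB).
have without0 : \sum_(t in B) ~~ has_num t ord0 * occ t k = 1.
  have : occs B k = 2 by rewrite occs_board /min_occs eq_sym (negbTE k0).
  rewrite /occs (eq_bigr (fun t => has_num t ord0 * occ t k + ~~ has_num t ord0 * occ t k)).
    by rewrite big_split /= with0 add1n => -[].
  by move=> t _; case: has_num; rewrite /= ?mul0n ?mul1n ?addn0.
have has0_le7 : \sum_(t in B) has_num t ord0 <= 7.
  by rewrite -[X in _ <= X]sum_tiles_has0 big_mkcond leq_sum // => t _; case: ifP.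
have inter : \sum_(t in B) (t \in avoiding k) = #|B :&: avoiding k|.
  rewrite -sum1_card big_mkcond [RHS]big_mkcond; apply: eq_bigr => t _.
  by rewrite !inE; case: (t \in B).
have : #|B| <= \sum_(t in B) (has_num t ord0 + ~~ has_num t ord0 * occ t k + (t \in avoiding k)).
  rewrite -sum1_card; apply: leq_sum => t _; rewrite inE.
  by case: (has_num t ord0) => //=; rewrite has_numE; case: (occ t k).
rewrite card_board !big_split /= without0 inter.
by move: has0_le7; set s0 := \sum_(t in B) _; set c := #|_|; lia.
Qed.

End MinimalBoard.

Definition seq_occ (s : seq tile) (x : 'I_7) : nat := \sum_(t <- s) occ t x.

Definition ends_occ (e : ends) (x : 'I_7) : nat :=
  if e is Some (l, r) then (l == x) + (r == x) else 0.

Definition paired (e : ends) (s : seq tile) : Prop :=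
  forall x, ~~ odd (seq_occ s x + ends_occ e x).

Definition place (e : ends) (t : tile) (lft : bool) : ends :=
  match e with
  | None => Some ((sval t).1, (sval t).2)
  | Some (l, r) => if lft then Some (other t l, r) else Some (l, other t r)
  end.

Definition legal (e : ends) (t : tile) (lft : bool) : bool :=
  if e is Some (l, r) then has_num t (if lft then l else r) else true.

Lemma placed_tiles_play t lft ms : placed_tiles (Play t lft :: ms) = t :: placed_tiles ms.
Proof. by []. Qed.

Lemma final_ends_play e t lft ms : final_ends e (Play t lft :: ms) = final_ends (place e t lft) ms.
Proof. by case: e => [[l r]|]. Qed.

Lemma valid_from_play d e s i t lft ms :
  valid_from d e s i (Play t lft :: ms) ->
  [/\ t \in hand d s (turn i), legal e t lft & valid_from d (place e t lft) (t :: s) i.+1 ms].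
Proof. by case: e => [[l r]|] [_ [t_hand]] //; case: lft => -[]. Qed.

Lemma valid_from_pass d e s i ms : valid_from d e s i (Pass :: ms) -> valid_from d e s i.+1 ms.
Proof. by case=> _ []. Qed.

Lemma valid_from_uniq d e s i ms :
  valid_from d e s i ms -> uniq s -> uniq (catrev (placed_tiles ms) s).
Proof.
elim: ms e s i => [|[|t lft] ms IH] e s i //; first by move/valid_from_pass/IH.
case/valid_from_play; rewrite inE => /andP[_ t_new] _ /IH uniq_ts s_uniq.
by rewrite placed_tiles_play uniq_ts //= t_new.
Qed.

Lemma odd_occ_place e t lft x : legal e t lft ->
  odd (occ t x + ends_occ (place e t lft) x) = odd (ends_occ e x).
Proof.
case: e => [[l r]|] /=; last by rewrite addnn odd_double.
by case: lft => /occ_other ->; rewrite !oddD !oddb; do 3!case: (_ == x).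
Qed.

Lemma paired_place e t lft s : legal e t lft -> paired e s -> paired (place e t lft) (t :: s).
Proof.
move=> t_legal s_paired x.
by rewrite /seq_occ big_cons addnAC oddD odd_occ_place // -oddD addnC; apply: s_paired.
Qed.

Lemma valid_from_paired d e s i ms :
  valid_from d e s i ms -> paired e s -> paired (final_ends e ms) (catrev (placed_tiles ms) s).
Proof.
elim: ms e s i => [|[|t lft] ms IH] e s i //; first by move/valid_from_pass/IH.
case/valid_from_play => _ t_legal /IH paired_ts s_paired.
by rewrite placed_tiles_play final_ends_play; apply/paired_ts/paired_place.
Qed.

Lemma valid_from_owner d e s i ms t :
  valid_from d e s i ms -> t \in placed_tiles ms ->
  exists2 j, j < size ms & is_play (nth Pass ms j) && (d t == turn (i + j)).
Proof.
elim: ms e s i => [|[|t' lft] ms IH] e s i //.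
  move/valid_from_pass/IH => /[apply] -[j j_lt j_play].
  by exists j.+1; rewrite // -addSnnS.
case/valid_from_play; rewrite inE => /andP[/eqP t'_owner _] _ valid_ms.
rewrite placed_tiles_play inE => /predU1P[-> | /(IH _ _ _ valid_ms)[j j_lt j_play]].
  by exists 0; rewrite // addn0 t'_owner eqxx.
by exists j.+1; rewrite // -addSnnS.
Qed.

Lemma blocked_placed d l r s t :
  blocked d (Some (l, r)) s -> has_num t l || has_num t r -> t \in s.
Proof.
move=> /forallP/(_ (d t))/forall_inP/(_ t) t_stuck t_lr; apply: contraT => t_out.
have t_hand : t \in hand d s (d t) by rewrite inE eqxx t_out.
by have := t_stuck t_hand; rewrite /= t_lr.
Qed.

Lemma paired_start : paired None [::].
Proof. by move=> x; rewrite /seq_occ big_nil. Qed.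

Lemma game_placed_uniq d ms : game d ms -> uniq (placed_tiles ms).
Proof. by move/valid_from_uniq => /(_ isT); rewrite rev_uniq. Qed.

Lemma tranca_board d ms : game d ms -> ends_in_tranca d ms ->
  exists v, (forall t, has_num t v -> t \in placed_tiles ms) /\
            forall x, ~~ odd (occs [set t in placed_tiles ms] x).
Proof.
move=> G [_ []]; have := valid_from_paired G paired_start.
case: (final_ends None ms) => [[l r]|] // paired_end _ stuck.
have placed_lr t : has_num t l || has_num t r -> t \in placed_tiles ms := blocked_placed stuck.
have occsE x : seq_occ (catrev (placed_tiles ms) [::]) x = occs [set t in placed_tiles ms] x.
  rewrite /seq_occ -/(rev _) big_rev (big_uniq _ (game_placed_uniq G)).
  by apply: eq_bigl => t; rewrite inE.
have l_placed t : has_num t l -> t \in placed_tiles ms by move=> t_l; rewrite placed_lr ?t_l.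
have r_l : r = l.
  have := paired_end l; rewrite occsE occs_full => [|t /l_placed]; last by rewrite inE.
  by rewrite /ends_occ eqxx; case: eqP.
exists l; split=> // x; have := paired_end x.
by rewrite occsE /ends_occ r_l addnn oddD odd_double addbF.
Qed.

Lemma card_team d b : valid_deal d -> #|[set t | in_team b (d t)]| = 14.
Proof.
move=> d_valid; rewrite -sum1_card (partition_big d (in_team b)) => [|t]; last by rewrite inE.
rewrite (eq_bigr (fun=> 7)) => [|p p_b].
  by rewrite big_mkcond !big_ord_recl big_ord0; case: b.
rewrite -[RHS](d_valid p) -sum1_card; apply: eq_bigl => t; rewrite !inE.
by case: eqP => [-> | _]; rewrite ?andbF ?andbT.
Qed.

Theorem mainTheorem4 (d : deal) (ms : seq move) (b : bool) (k : 'I_7) :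
  valid_deal d ->
  tranca_minima d ms ->
  losing_team d ms b ->
  1 <= k ->
  (forall t : tile, in_team b (d t) -> ~~ has_num t ord0 && ~~ has_num t k) ->
  exists2 j, j < size ms & is_play (nth Pass ms j) && in_team b (turn j).
Proof.
move=> d_valid [G [tranca pips42]] _ k_gt0 b_avoid.
have [/hasP[t t_placed t_b] | /hasPn b_idle] :=
  boolP (has (fun t => in_team b (d t)) (placed_tiles ms)).
  have [j j_lt /andP[j_play]] := valid_from_owner G t_placed.
  by rewrite add0n => /eqP t_owner; exists j; rewrite // j_play -t_owner.
have [v [v_placed occs_even]] := tranca_board G tranca.
set B := [set t in placed_tiles ms] in occs_even.
have B_full t : has_num t v -> t \in B by rewrite inE; apply: v_placed.
have B_pips : \sum_(t in B) pips t = 42.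
  rewrite -pips42 /board_pips (big_uniq _ (game_placed_uniq G)).
  by apply: eq_bigl => t; rewrite inE.
have k0 : k != ord0 by apply: contraTneq k_gt0 => ->.
have team_idle : [set t | in_team b (d t)] \subset avoiding k :\: B.
  apply/subsetP => t; rewrite !inE => t_b; rewrite b_avoid // andbT.
  by apply: contraL t_b; apply: b_idle.
have := subset_leq_card team_idle; rewrite card_team // cardsD card_avoiding // setIC.
by have := avoiding_board B_full occs_even B_pips k0; set c := #|_|; lia.
Qed.
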